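(* Let $T$ be a decision tree of depth $d$ computing a Boolean function $f:\{-1,1\}^n\to\{0,1\}$, and let $p=\Pr_x[f(x)=1]$ for uniform $x\in\{-1,1\}^n$. Then $$\sum_{i=1}^n|\hat f(\{i\})|\ \le\ O\big(\sqrt d\cdot p\cdot\sqrt{\ln(e/p)}\big),$$ where $O(\cdot)$ hides a universal constant.
   Context: Fourier coefficients: $\hat f(S)=\mathbb E_{x}[f(x)\prod_{i\in S}x_i]$ for $x$ uniform on $\{-1,1\}^n$. *)

From HB Require Import structures.
From mathcomp Require Import all_boot all_order all_algebra.
From mathcomp Require Import reals sequences exp.
Set Implicit Arguments. Unset Strict Implicit. Unset Printing Implicit Defensive.
Import Order.TTheory GRing.Theory Num.Theory.
Local Open Scope ring_scope.

(* The Boolean cube {-1,1}^n: a point is encoded as x : {ffun 'I_n -> bool},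
   where the bit [true] stands for the coordinate value -1 and [false] for +1. *)
Definition cube (n : nat) := {ffun 'I_n -> bool}.

Definition sgn {R : ringType} (b : bool) : R := if b then -1 else 1.

(* Decision trees over the variables x_1..x_n with output in {0,1}.
   [Node i tm tp] queries x_i and continues with [tm] if x_i = -1,
   with [tp] if x_i = +1. *)
Inductive dtree (n : nat) : Type :=
  | Leaf of bool
  | Node of 'I_n & dtree n & dtree n.

Fixpoint depth n (T : dtree n) : nat :=
  match T with
  | Leaf _ => 0%N
  | Node _ tm tp => (maxn (depth tm) (depth tp)).+1
  end.

Fixpoint dt_eval n (T : dtree n) (x : cube n) : bool :=
  match T with
  | Leaf b => b
  | Node i tm tp => if x i then dt_eval tm x else dt_eval tp x
  end.

Definition computed {R : ringType} n (T : dtree n) : cube n -> R :=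
  fun x => (dt_eval T x)%:R.

Definition Ex {R : fieldType} n (g : cube n -> R) : R :=
  (2 ^+ n)^-1 * \sum_(x : cube n) g x.

Definition fourier {R : fieldType} n (f : cube n -> R) (S : {set 'I_n}) : R :=
  Ex (fun x => f x * \prod_(i in S) sgn (x i)).

Definition prob1 {R : fieldType} n (f : cube n -> R) : R :=
  Ex (fun x => if f x == 1 then 1 else 0).

(* Let s_i be the sign of f^({i}), so that the level-one weight is E[f(x) l(x)]
   with l(x) = sum_i s_i x_i.  Flipping a coordinate that the tree does not query
   on the path of x changes neither f(x) nor the path, so l may be replaced by its
   restriction M to the queried coordinates; M <= d.  Along a path every new query
   is a fresh uniform sign, hence E[exp(t M)] <= cosh(t)^d <= exp(2 t^2 d) for
   t^2 <= 1/2.  Jensen on the event f = 1 gives p exp(t mu) <= exp(2 t^2 d) for the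
   conditional mean mu of M, and t = sqrt(ln(e/p) / 4d) (or mu <= d when
   ln(e/p) > 2d) yields mu <= 3 sqrt(d ln(e/p)); the weight is p mu. *)

From HB Require Import structures.
From mathcomp Require Import all_boot all_order all_algebra.
From mathcomp Require Import reals sequences exp.
From mathcomp Require Import ring lra.
Set Implicit Arguments. Unset Strict Implicit. Unset Printing Implicit Defensive.
Import Order.TTheory GRing.Theory Num.Theory.
Local Open Scope ring_scope.

Section Cube.
Variables (R : realFieldType) (n : nat).

Definition flip (x : cube n) (i : 'I_n) : cube n :=
  [ffun j => if j == i then ~~ x j else x j].

Lemma flipK i : involutive (flip^~ i).
Proof. by move=> x; apply/ffunP=> j; rewrite !ffunE; case: eqP => // ->; rewrite negbK. Qed.

Lemma flip_eq x i : flip x i i = ~~ x i.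
Proof. by rewrite ffunE eqxx. Qed.

Lemma flip_neq x i j : j != i -> flip x i j = x j.
Proof. by rewrite ffunE => /negbTE ->. Qed.

Lemma sum_cube1 : \sum_(x : cube n) (1 : R) = 2 ^+ n.
Proof. by rewrite sumr_const card_ffun card_bool card_ord natrX. Qed.

Lemma sum_flip_odd i (g : cube n -> R) :
  (forall x, g (flip x i) = - g x) -> \sum_x g x = 0.
Proof.
move=> g_odd; set S := \sum_x g x.
have : S = - S by rewrite {1}/S (reindex_inj (can_inj (flipK i))) -sumrN; apply: eq_bigr.
lra.
Qed.

Lemma sum_cube_split i (g : cube n -> R) :
  \sum_x g x = \sum_(b : bool) \sum_(x : cube n | x i == b) g x.
Proof. exact: (partition_big (fun x : cube n => x i) predT). Qed.

Lemma sum_flip_half i b (g : cube n -> R) :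
  (forall x, g (flip x i) = g x) -> \sum_(x : cube n | x i == b) g x = (\sum_x g x) / 2.
Proof.
move=> g_even; rewrite (sum_cube_split i) big_bool /=.
have halves : \sum_(x : cube n | x i == false) g x = \sum_(x : cube n | x i == true) g x.
  rewrite (reindex_inj (can_inj (flipK i))) /=.
  by apply: eq_big => [x|x _]; rewrite ?flip_eq ?g_even //; case: (x i).
by rewrite halves; case: b; rewrite ?halves; lra.
Qed.

End Cube.

Arguments sum_flip_odd {R n} i g.
Arguments sum_flip_half {R n} i b g.

Section Paths.
Variable n : nat.
Implicit Types (T : dtree n) (x y : cube n).

Fixpoint queried T x : {set 'I_n} :=
  match T with
  | Leaf _ => set0
  | Node i tm tp => i |: (if x i then queried tm x else queried tp x)
  end.

Lemma card_queried T x : (#|queried T x| <= depth T)%N.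
Proof.
elim: T => [b|i tm IHm tp IHp] /=; first by rewrite cards0.
rewrite cardsU1 -add1n leq_add ?leq_b1 //.
by case: (x i); [apply: leq_trans (leq_maxl _ _) | apply: leq_trans (leq_maxr _ _)].
Qed.

Lemma agree_on_queried T x y : {in queried T x, x =1 y} ->
  dt_eval T y = dt_eval T x /\ queried T y = queried T x.
Proof.
elim: T => [b|i tm IHm tp IHp] //= xy.
have <- : x i = y i by apply: xy; rewrite setU11.
case: (x i) xy => xy; [have [|-> ->] := IHm | have [|-> ->] := IHp] => // j jQ;
  exact: xy (setU1r _ jQ).
Qed.

Fixpoint restrict T i b :=
  match T with
  | Leaf c => Leaf n c
  | Node j tm tp =>
      if j == i then (if b then restrict tm i b else restrict tp i b)
      else Node j (restrict tm i b) (restrict tp i b)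
  end.

Lemma depth_restrict T i b : (depth (restrict T i b) <= depth T)%N.
Proof.
elim: T => [c|j tm IHm tp IHp] //=; case: eqP => _ /=.
  by case: ifP => _; [apply: leq_trans IHm _ | apply: leq_trans IHp _];
    apply: leq_trans (leqnSn _); rewrite ?leq_maxl ?leq_maxr.
by rewrite ltnS geq_max (leq_trans IHm (leq_maxl _ _)) (leq_trans IHp (leq_maxr _ _)).
Qed.

Lemma notin_queried_restrict T i b x : i \notin queried (restrict T i b) x.
Proof.
elim: T => [c|j tm IHm tp IHp] /=; first by rewrite in_set0.
case: eqP => [_|/eqP ji]; first by case: ifP.
by rewrite /= in_setU1 negb_or eq_sym ji; case: (x j).
Qed.

Lemma queried_restrict T i x :
  i |: queried (restrict T i (x i)) x = i |: queried T x.
Proof.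
elim: T => [c|j tm IHm tp IHp] //=; case: eqP => [->|_] /=.
  by rewrite setUA setUid; case: ifP => _; rewrite ?IHm ?IHp.
by rewrite setUCA [RHS]setUCA; case: ifP => _; rewrite ?IHm ?IHp.
Qed.

Lemma flip_off_path T x j : j \notin queried T x ->
  dt_eval T (flip x j) = dt_eval T x /\ queried T (flip x j) = queried T x.
Proof.
move=> jQ; apply: agree_on_queried => k kQ.
by rewrite flip_neq //; apply: contraNneq jQ => <-.
Qed.

Lemma mem_queried_flip T x j :
  (j \in queried T (flip x j)) = (j \in queried T x).
Proof.
apply/idP/idP; apply: contraLR => jQ.
  by have [_ ->] := flip_off_path jQ.
by have [_] := flip_off_path jQ; rewrite flipK => ->.
Qed.

End Paths.

Section RealBounds.
Variable R : realType.

Definition coshR (l : R) : R := (expR l + expR (- l)) / 2.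

Lemma coshR_ge1 (l : R) : 1 <= coshR l.
Proof. by rewrite /coshR; have := expR_ge1Dx l; have := expR_ge1Dx (- l); lra. Qed.

Lemma coshR_mul_le (l : R) : l ^+ 2 <= 1 -> coshR l * (1 - l ^+ 2) <= 1.
Proof.
move=> l2; have lm : -1 <= l by nra.
have lp : l <= 1 by nra.
have ab : expR l * expR (- l) = 1 by rewrite -expRD subrr expR0.
have a0 := expR_gt0 l; have b0 := expR_gt0 (- l).
have ha : expR l * (1 - l) <= 1.
  by rewrite -[X in _ <= X]ab ler_pM2l //; apply: expR_ge1Dx.
have hb : expR (- l) * (1 + l) <= 1.
  by rewrite -[X in _ <= X]ab [X in _ <= X]mulrC ler_pM2l //; apply: expR_ge1Dx.
rewrite /coshR; nra.
Qed.

Lemma coshR_le_expR (l : R) : l ^+ 2 <= 1 / 2 -> coshR l <= expR (2 * l ^+ 2).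
Proof.
move=> l2; apply: le_trans (expR_ge1Dx _).
have := coshR_mul_le (_ : l ^+ 2 <= 1); have := sqr_ge0 l; nra.
Qed.

Lemma jensen_expR (I : finType) (P : {pred I}) (g : I -> R) : (0 < #|P|)%N ->
  #|P|%:R * expR ((\sum_(i in P) g i) / #|P|%:R) <= \sum_(i in P) expR (g i).
Proof.
move=> P0; set m := (\sum_(i in P) g i) / #|P|%:R.
have mP : \sum_(i in P) (g i - m) = 0.
  by rewrite sumrB sumr_const /m -[_ *+ #|P|]mulr_natr divfK ?subrr // pnatr_eq0 -lt0n.
(* tangent line of [expR] at [m] *)
apply: le_trans (_ : _ <= \sum_(i in P) expR m * (1 + (g i - m))) _.
  by rewrite -mulr_sumr big_split /= mP addr0 sumr_const mulrC.
apply: ler_sum => i _; rewrite -{2}(subrK m (g i)) expRD [X in _ <= X]mulrC.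
by rewrite ler_pM2l ?expR_gt0 // expR_ge1Dx.
Qed.

Lemma mean_le_of_mgf (d : nat) (mu q : R) : 0 < q -> q <= 1 -> mu <= d%:R ->
  (forall l, 0 <= l -> l ^+ 2 <= 1 / 2 -> q * expR (l * mu) <= expR (2 * l ^+ 2 * d%:R)) ->
  mu <= 3 * Num.sqrt d%:R * Num.sqrt (ln (expR 1 / q)).
Proof.
move=> q0 q1 mud mgf; set L := ln (expR 1 / q).
have eL : expR L = expR 1 / q by rewrite lnK // posrE divr_gt0 ?expR_gt0.
have L1 : 1 <= L by rewrite -ler_expR eL ler_pdivlMr // ler_piMr ?expR_ge0.
set u := Num.sqrt d%:R; set v := Num.sqrt L.
have u0 : 0 <= u := sqrtr_ge0 _.
have u2 : u ^+ 2 = d%:R by rewrite sqr_sqrtr.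
have v2 : v ^+ 2 = L by rewrite sqr_sqrtr //; lra.
have v0 : 0 < v by rewrite sqrtr_gt0; lra.
have [Ld|dL] := leP L (2 * d%:R); last first.
  (* large [L]: the trivial bound [mu <= d] already suffices *)
  have uv : u <= v by rewrite -(ler_pXn2r (_ : 0 < 2)%N) ?nnegrE ?u2 ?v2 ?(ltW v0) //; lra.
  have := ler_wpM2l u0 uv; have := mulr_ge0 u0 (ltW v0).
  rewrite expr2 in u2; lra.
(* otherwise take [l = sqrt (L / 4 d)] *)
have up : 0 < u by rewrite sqrtr_gt0; lra.
set l := v / (2 * u).
have l0 : 0 <= l by rewrite divr_ge0 ?mulr_ge0 // ltW.
have l2 : l ^+ 2 * (4 * d%:R) = L by rewrite -u2 -v2 /l; field; rewrite gt_eqF.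
have d0 : 0 < d%:R :> R by rewrite -u2 exprn_gt0.
have mgfl := mgf l l0 (_ : l ^+ 2 <= 1 / 2).
rewrite (_ : 2 * l ^+ 2 * d%:R = L / 2) in mgfl; last by rewrite -l2; field.
have lmu : l * mu <= 3 / 2 * L.
  rewrite -ler_expR (_ : 3 / 2 * L = L / 2 + L) ?expRD ?eL; last by field.
  rewrite mulrA ler_pdivlMr // mulrC; apply: le_trans (mgfl _) _; first by nra.
  by rewrite ler_peMr ?expR_ge0 //; have := expR_ge1Dx (1 : R); lra.
have lp : 0 < l by rewrite divr_gt0 ?mulr_gt0.
rewrite -(ler_pM2l lp) (_ : l * (3 * u * v) = 3 / 2 * L) // /l -v2.
by field; rewrite gt_eqF.
Qed.

End RealBounds.

Section PathSum.
Variables (R : realType) (n : nat) (s : 'I_n -> bool).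
Implicit Types (T : dtree n) (x : cube n).

Definition path_lin T x : R := \sum_(j in queried T x) sgn (s j) * sgn (x j).

Lemma path_lin_le_depth T x : path_lin T x <= (depth T)%:R.
Proof.
apply: le_trans (_ : _ <= \sum_(j in queried T x) 1) _.
  by apply: ler_sum => j _; rewrite /sgn; case: (s j); case: (x j); lra.
by rewrite sumr_const ler_nat card_queried.
Qed.

Lemma path_lin_flip T x i : i \notin queried T x -> path_lin T (flip x i) = path_lin T x.
Proof.
move=> iQ; rewrite /path_lin; have [_ ->] := flip_off_path iQ.
by apply: eq_bigr => j jQ; rewrite flip_neq //; apply: contraNneq iQ => <-.
Qed.

Lemma sum_computed_lin_path T :
  \sum_x computed T x * \sum_j sgn (s j) * sgn (x j) =
  \sum_x computed T x * path_lin T x.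
Proof.
pose off j x : R :=
  if j \in queried T x then 0 else computed T x * (sgn (s j) * sgn (x j)).
have off_cancel j : \sum_x off j x = 0.
  apply: (sum_flip_odd j) => x; rewrite /off mem_queried_flip.
  case: ifPn => [_|jQ]; first by rewrite oppr0.
  have [evalE _] := flip_off_path jQ.
  by rewrite /computed evalE flip_eq /sgn; case: (x j); case: (s j); rewrite /=; ring.
have split_off x : computed T x * \sum_j sgn (s j) * sgn (x j) =
                   computed T x * path_lin T x + \sum_j off j x.
  rewrite (bigID (mem (queried T x))) mulrDr /path_lin mulr_sumr; congr (_ + _).
  rewrite [RHS](bigID (mem (queried T x))) /=.
  have -> : \sum_(j in queried T x) off j x = 0 by apply: big1 => j jQ; rewrite /off jQ.
  by rewrite add0r mulr_sumr; apply: eq_bigr => j /negbTE jQ; rewrite /off jQ.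
under eq_bigr do rewrite split_off.
rewrite big_split /= exchange_big /=.
by rewrite [X in _ + X]big1 ?addr0.
Qed.

Lemma path_lin_Node i tm tp x : path_lin (Node i tm tp) x =
  sgn (s i) * sgn (x i) + path_lin (restrict (if x i then tm else tp) i (x i)) x.
Proof.
rewrite /path_lin /=.
have -> : (if x i then queried tm x else queried tp x) = queried (if x i then tm else tp) x.
  by case: (x i).
by rewrite -queried_restrict big_setU1 ?notin_queried_restrict.
Qed.

Lemma sum_expR_path_lin_le l d T : (depth T <= d)%N ->
  \sum_x expR (l * path_lin T x) <= 2 ^+ n * coshR l ^+ d.
Proof.
have leaf_sum b : \sum_x expR (l * path_lin (Leaf n b) x) = 2 ^+ n.
  by rewrite -sum_cube1; apply: eq_bigr => x _; rewrite /path_lin big_set0 mulr0 expR0.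
elim: d T => [|d IHd] [b|i tm tp] //= dT.
- by rewrite leaf_sum expr0 mulr1.
- by rewrite leaf_sum ler_peMr ?exprn_ege1 ?coshR_ge1 // exprn_ge0.
move: dT; rewrite ltnS geq_max => /andP[dm dp].
(* On the half-cube [x i = b] the tree follows [Tb b], which never queries [x i],
   so the sum over that half-cube is half the sum over the whole cube. *)
pose Tb b := restrict (if b then tm else tp) i b.
have half b : \sum_(x : cube n | x i == b) expR (l * path_lin (Node i tm tp) x) =
              expR (l * (sgn (s i) * sgn b)) * ((\sum_x expR (l * path_lin (Tb b) x)) / 2).
  rewrite -(sum_flip_half i b) => [|x]; last by rewrite path_lin_flip ?notin_queried_restrict.
  by rewrite mulr_sumr; apply: eq_bigr => x /eqP xi; rewrite path_lin_Node xi mulrDr expRD.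
have IHb b : \sum_x expR (l * path_lin (Tb b) x) <= 2 ^+ n * coshR l ^+ d.
  by apply: IHd; apply: leq_trans (depth_restrict _ _ _) _; case: b.
have cosh_sum : expR (l * (sgn (s i) * sgn true)) + expR (l * (sgn (s i) * sgn false)) =
                2 * coshR l.
  rewrite /coshR /sgn; case: (s i); rewrite ?mulN1r ?opprK ?mul1r ?mulr1 ?mulrN1; lra.
set B := 2 ^+ n * coshR l ^+ d.
have -> : 2 ^+ n * coshR l ^+ d.+1 =
          expR (l * (sgn (s i) * sgn true)) * (B / 2) +
          expR (l * (sgn (s i) * sgn false)) * (B / 2).
  by rewrite -mulrDl cosh_sum exprS /B; field.
rewrite (sum_cube_split i) big_bool /= !half.
by apply: lerD; rewrite ler_wpM2l ?expR_ge0 // ler_pM2r ?IHb ?invr_gt0.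
Qed.

End PathSum.

Arguments path_lin {R n} s T x.

Lemma norm_sgn_lt0 (R : realDomainType) (a : R) : `|a| = sgn (a < 0) * a.
Proof. by rewrite /sgn; case: ltrP => a0; [rewrite mulN1r ltr0_norm | rewrite mul1r ger0_norm]. Qed.

Lemma sum_norm_fourier1 (R : realFieldType) n (f : cube n -> R) :
  \sum_i `|fourier f [set i]| =
  Ex (fun x => f x * \sum_i sgn (fourier f [set i] < 0) * sgn (x i)).
Proof.
set s := fun i => fourier f [set i] < 0.
transitivity (\sum_i (2 ^+ n)^-1 * \sum_x sgn (s i) * (f x * sgn (x i))).
  apply: eq_bigr => i _; rewrite norm_sgn_lt0 {2}/fourier /Ex mulrCA mulr_sumr.
  by congr (_ * _); apply: eq_bigr => x _; rewrite big_set1.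
rewrite /Ex -mulr_sumr exchange_big; congr (_ * _); apply: eq_bigr => x _.
by rewrite mulr_sumr; apply: eq_bigr => i _; rewrite mulrCA.
Qed.

Lemma computedE (R : nzRingType) n (T : dtree n) x : computed T x = (x \in dt_eval T)%:R :> R.
Proof. by []. Qed.

Section Level1Weight.
Variables (R : realType) (n : nat) (T : dtree n).

Let f : cube n -> R := computed T.
Let s i := fourier f [set i] < 0.
Let mu : R := (\sum_(x in dt_eval T) path_lin s T x) / #|dt_eval T|%:R.

Lemma prob1_computed : prob1 f = #|dt_eval T|%:R / 2 ^+ n.
Proof.
rewrite /prob1 /Ex mulrC -sumr_const; congr (_ * _); rewrite [RHS]big_mkcond.
by apply: eq_bigr => x _; rewrite /f computedE; case: (_ \in _); rewrite ?eqxx // eq_sym oner_eq0.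
Qed.

Lemma sum_norm_fourier1_computed : \sum_i `|fourier f [set i]| = prob1 f * mu.
Proof.
rewrite sum_norm_fourier1 /Ex sum_computed_lin_path prob1_computed /mu.
have [P0|P0] := eqVneq #|dt_eval T| 0.
  rewrite P0 !mul0r big1 ?mulr0 // => x _.
  by rewrite computedE (card0_eq P0) mul0r.
rewrite [RHS](_ : _ = 2 ^- n * \sum_(x in dt_eval T) path_lin s T x); last first.
  by field; rewrite pnatr_eq0 P0 andbT expf_neq0 ?pnatr_eq0.
congr (_ * _); rewrite [RHS]big_mkcond.
by apply: eq_bigr => x _; rewrite computedE; case: (_ \in _); rewrite ?mul1r ?mul0r.
Qed.

Hypothesis supp : (0 < #|dt_eval T|)%N.

Lemma mean_path_lin_le_depth : mu <= (depth T)%:R.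
Proof.
rewrite /mu ler_pdivrMr ?ltr0n // mulr_natr -sumr_const.
by apply: ler_sum => x _; apply: path_lin_le_depth.
Qed.

Lemma prob1_mgf_le l : prob1 f * expR (l * mu) <= coshR l ^+ depth T.
Proof.
rewrite prob1_computed mulrAC ler_pdivrMr ?exprn_gt0 // [X in _ <= X]mulrC.
have -> : l * mu = (\sum_(x in dt_eval T) l * path_lin s T x) / #|dt_eval T|%:R.
  by rewrite /mu -mulr_sumr mulrA.
apply: le_trans (jensen_expR _ supp) _.
apply: le_trans (sum_expR_path_lin_le s l (leqnn _)).
rewrite [X in _ <= X](bigID (dt_eval T)) /= lerDl.
by apply: sumr_ge0 => x _; apply: expR_ge0.
Qed.

End Level1Weight.

Arguments mean_path_lin_le_depth {R n T}.

Unset Implicit Arguments.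

Theorem mainTheorem6 (R : realType) :
  exists C : R, 0 < C /\
    forall (n d : nat) (T : dtree n), depth T = d ->
      let f : cube n -> R := computed T in
      let p := prob1 f in
      \sum_(i < n) `| fourier f [set i] |
        <= C * Num.sqrt (d%:R) * p * Num.sqrt (ln (expR 1 / p)).
Proof.
exists 3; split => // n d T <-; cbv zeta.
rewrite sum_norm_fourier1_computed; set p := prob1 _.
set mu := (\sum_(x in dt_eval T) _) / _.
have [P0|supp] := posnP #|dt_eval T|.
  by rewrite /p prob1_computed P0 !(mul0r, mulr0).
have p0 : 0 < p by rewrite /p prob1_computed divr_gt0 ?ltr0n ?exprn_gt0.
have p1 : p <= 1.
  rewrite /p prob1_computed ler_pdivrMr ?exprn_gt0 // mul1r -natrX ler_nat.
  by apply: leq_trans (max_card _) _; rewrite card_ffun card_bool card_ord.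
have mgf l : 0 <= l -> l ^+ 2 <= 1 / 2 ->
    p * expR (l * mu) <= expR (2 * l ^+ 2 * (depth T)%:R).
  move=> l0 l2; apply: le_trans (prob1_mgf_le supp l) _.
  rewrite mulrC expRM_natl lerXn2r ?nnegrE ?expR_ge0 ?coshR_le_expR //.
  exact: le_trans (coshR_ge1 l).
rewrite [X in _ <= X]mulrAC [X in _ <= X]mulrC ler_wpM2l ?(ltW p0) //.
exact: mean_le_of_mgf p0 p1 (mean_path_lin_le_depth supp) mgf.
Qed.
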